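(* Let $d\ge3$ and $\mathcal D=\mathbb S_1^{d-1}$. Then for any $M\in\mathrm{SL}(d+1,\mathbb R)$, $\mathcal G_{\mathcal D}(M)\le\sigma_d+1$, where $\sigma_d$ is the kissing number of $\mathbb R^d$.
   Context: $\mathbb S_1^{d-1}$ is the unit sphere in $\mathbb R^d$. Elements of $\mathbb R^{d+1}$ are row vectors $(u,\vec v)$ with $u\in\mathbb R$, $\vec v\in\mathbb R^d$; $\mathbb Z^{d+1}M$ is the lattice $\{\vec mM:\vec m\in\mathbb Z^{d+1}\}$. For $\mathcal D\subseteq\mathbb S_1^{d-1}$ and $t\in(0,1)$, $\mathcal Q_{\mathcal D}(M,t)=\{(u,\vec v)\in\mathbb Z^{d+1}M : -t<u<1-t,\ \vec v\in\mathbb R_{>0}\mathcal D\}$, $F_{\mathcal D}(M,t)=\min\{|\vec v| : (u,\vec v)\in\mathcal Q_{\mathcal D}(M,t)\}$, and $\mathcal G_{\mathcal D}(M)=|\{F_{\mathcal D}(M,t):0<t<1\}|$. The kissing number $\sigma_d$ is the maximal number of non-overlapping unit balls in $\mathbb R^d$ touching a fixed unit ball. *)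

From HB Require Import structures.
From mathcomp Require Import all_boot all_order all_algebra.
From mathcomp Require Import boolp classical_sets reals ereal.
Set Implicit Arguments. Unset Strict Implicit. Unset Printing Implicit Defensive.
Import Order.TTheory GRing.Theory Num.Theory.
Local Open Scope ring_scope.
Local Open Scope classical_set_scope.

Definition enorm (R : realType) (n : nat) (v : 'rV[R]_n) : R :=
  Num.sqrt (\sum_(i < n) v 0 i ^+ 2).

Definition unit_sphere (R : realType) (d : nat) : set 'rV[R]_d :=
  [set w | enorm w = 1].

Definition lattice (R : realType) (d : nat) (M : 'M[R]_(1 + d)) : set 'rV[R]_(1 + d) :=
  [set x | exists m : 'rV[int]_(1 + d), x = map_mx intr m *m M].

Definition cone (R : realType) (d : nat) (D : set 'rV[R]_d) : set 'rV[R]_d :=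
  [set v | exists r : R, 0 < r /\ exists2 w, D w & v = r *: w].

(* Q_D(M,t): lattice points (u, v) (u = first coordinate, v = last d
   coordinates) with -t < u < 1 - t and v in R_{>0} D *)
Definition Qset (R : realType) (d : nat) (D : set 'rV[R]_d)
    (M : 'M[R]_(1 + d)) (t : R) : set 'rV[R]_(1 + d) :=
  [set x | lattice M x /\ - t < lsubmx x 0 0 < 1 - t /\ cone D (rsubmx x)].

(* F_D(M,t) = min { |v| : (u,v) in Q_D(M,t) }, taken as the infimum
   (which equals the minimum whenever the minimum exists). *)
Definition Fval (R : realType) (d : nat) (D : set 'rV[R]_d)
    (M : 'M[R]_(1 + d)) (t : R) : R :=
  inf [set enorm (rsubmx x) | x in Qset D M t].

(* The set { F_D(M,t) : 0 < t < 1 } whose cardinality is G_D(M) *)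
Definition Fvalues (R : realType) (d : nat) (D : set 'rV[R]_d)
    (M : 'M[R]_(1 + d)) : set R :=
  [set Fval D M t | t in [set t : R | 0 < t < 1]].

(* n non-overlapping unit balls in R^d all touching the unit ball at the
   origin: centers c_i with |c_i| = 2 and |c_i - c_j| >= 2 for i <> j. *)
Definition kissing_config (R : realType) (d n : nat) : Prop :=
  exists c : 'I_n -> 'rV[R]_d,
    (forall i, enorm (c i) = 2) /\
    (forall i j, i != j -> 2 <= enorm (c i - c j)).

(* The kissing number sigma_d: the maximal such n (as a supremum in the
   extended reals). *)
Definition kissing_number (R : realType) (d : nat) : \bar R :=
  ereal_sup [set (n%:R)%:E | n in [set n : nat | kissing_config R d n]].

From HB Require Import structures.
From mathcomp Require Import all_boot all_order all_algebra.
From mathcomp Require Import boolp classical_sets reals ereal.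
From mathcomp Require Import ring lra.
Set Implicit Arguments. Unset Strict Implicit. Unset Printing Implicit Defensive.
Import Order.TTheory GRing.Theory Num.Theory.
Local Open Scope ring_scope.
Local Open Scope classical_set_scope.

(* Let S be the set of lengths |v| of lattice points (u, v) with |u| < 1/2 and v <> 0.
   Each such point or its opposite lies in Q(t) for every t, so F(t) <= inf S always, and
   all values of F not strictly below S coincide: at most one value is of that kind.  For
   each value F(t_i) strictly below S pick a near-minimiser (u_i, v_i) in Q(t_i), flipped
   so that 1/2 <= u_i < 1; it is not in the slab, and |v_i| < every element of S.  For
   i <> j the difference (u_i - u_j, v_i - v_j) is in the slab, so
   |v_i|, |v_j| < |v_i - v_j|: the angle between v_i and v_j is at least pi/3 and the
   rescaled vectors 2 v_i / |v_i| form a kissing configuration. *)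

Lemma exists_min_gap (R : realDomainType) (I : finType) (f : I -> R) :
  exists2 e, 0 < e & forall i j, f i < f j -> f i + e <= f j.
Proof.
exists (\big[Order.min/1]_(p : I * I | f p.1 < f p.2) (f p.2 - f p.1)).
  by apply: lt_bigmin => // p; rewrite subr_gt0.
move=> i j fij; rewrite -lerBrDl.
exact: (@bigmin_le_cond _ _ _ 1 (i, j) (fun p : I * I => f p.1 < f p.2)).
Qed.

Section EuclideanNorm.
Variables (R : realType) (n : nat).
Implicit Types (v w : 'rV[R]_n) (a b : R).

Definition sqnorm v : R := \sum_(i < n) v 0 i ^+ 2.
Definition dotr v w : R := \sum_(i < n) v 0 i * w 0 i.

Lemma enormE v : enorm v = Num.sqrt (sqnorm v).
Proof. by []. Qed.

Lemma sqnorm_ge0 v : 0 <= sqnorm v.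
Proof. by apply: sumr_ge0 => i _; rewrite sqr_ge0. Qed.

Lemma enorm_ge0 v : 0 <= enorm v.
Proof. exact: sqrtr_ge0. Qed.

Lemma sqr_enorm v : enorm v ^+ 2 = sqnorm v.
Proof. by rewrite sqr_sqrtr // sqnorm_ge0. Qed.

Lemma sqnorm_eq0 v : (sqnorm v == 0) = (v == 0).
Proof.
apply/idP/eqP => [|->]; last by rewrite /sqnorm big1 // => i _; rewrite mxE expr0n.
rewrite psumr_eq0 => [/allP v0|i _]; last exact: sqr_ge0.
apply/matrixP => i j; rewrite ord1 mxE.
by have /implyP/(_ isT) := v0 j (mem_index_enum _); rewrite sqrf_eq0 => /eqP.
Qed.

Lemma enorm_gt0 v : (0 < enorm v) = (v != 0).
Proof. by rewrite sqrtr_gt0 lt_def sqnorm_eq0 sqnorm_ge0 andbT. Qed.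

Lemma sqnormZB a b v w :
  sqnorm (a *: v - b *: w) = a ^+ 2 * sqnorm v + b ^+ 2 * sqnorm w - 2 * a * b * dotr v w.
Proof.
rewrite /sqnorm /dotr !mulr_sumr -big_split -sumrB /=.
by apply: eq_bigr => i _; rewrite !mxE; ring.
Qed.

Lemma enormZ a v : enorm (a *: v) = `|a| * enorm v.
Proof.
rewrite !enormE; have -> : sqnorm (a *: v) = a ^+ 2 * sqnorm v.
  by rewrite -[a *: v]subr0 -(scale0r v) sqnormZB; ring.
by rewrite sqrtrM ?sqr_ge0 // sqrtr_sqr.
Qed.

Lemma enormN v : enorm (- v) = enorm v.
Proof. by rewrite -scaleN1r enormZ normrN normr1 mul1r. Qed.

Definition to_sphere2 v := (2 / enorm v) *: v.

Lemma enorm_to_sphere2 v : v != 0 -> enorm (to_sphere2 v) = 2.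
Proof.
rewrite -enorm_gt0 => v_gt0.
by rewrite enormZ ger0_norm ?divr_ge0 ?ltW // mulfVK ?gt_eqF.
Qed.

(* If [v - w] is at least as long as [v] and [w], the angle between [v] and [w] is at least
   pi/3, so their projections to the sphere of radius 2 are at distance at least 2. *)
Lemma to_sphere2_sep v w : v != 0 -> w != 0 ->
  enorm v <= enorm (v - w) -> enorm w <= enorm (v - w) ->
  2 <= enorm (to_sphere2 v - to_sphere2 w).
Proof.
rewrite -!enorm_gt0 => v_gt0 w_gt0 vB wB.
have sqrB : enorm (v - w) ^+ 2 = enorm v ^+ 2 + enorm w ^+ 2 - 2 * dotr v w.
  by rewrite !sqr_enorm -[v - w]scale1r -[v]scale1r -[w]scale1r scalerBr sqnormZB; ring.
have dot_le : 2 * dotr v w <= enorm v * enorm w.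
  have := enorm_ge0 (v - w); nra.
have sqr_sep : enorm (to_sphere2 v - to_sphere2 w) ^+ 2 =
    8 - 8 * dotr v w / (enorm v * enorm w).
  rewrite sqr_enorm sqnormZB -!sqr_enorm; field.
  by rewrite !gt_eqF.
have : 8 * dotr v w / (enorm v * enorm w) <= 4.
  by rewrite ler_pdivrMr ?mulr_gt0 //; nra.
have := enorm_ge0 (to_sphere2 v - to_sphere2 w); nra.
Qed.

End EuclideanNorm.

Section LatticeSlab.
Variables (R : realType) (d : nat) (M : 'M[R]_(1 + d)).
Implicit Types (t g : R) (x y z : 'rV[R]_(1 + d)).

Local Notation Q := (Qset (@unit_sphere R d) M).
Local Notation F := (Fval (@unit_sphere R d) M).

Definition ucoord x : R := lsubmx x 0 0.

Lemma ucoordN x : ucoord (- x) = - ucoord x.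
Proof. by rewrite /ucoord raddfN mxE. Qed.

Lemma ucoordB x y : ucoord (x - y) = ucoord x - ucoord y.
Proof. by rewrite /ucoord raddfB !mxE. Qed.

Lemma latticeN x : lattice M x -> lattice M (- x).
Proof. by case=> m ->; exists (- m); rewrite map_mxN mulNmx. Qed.

Lemma latticeB x y : lattice M x -> lattice M y -> lattice M (x - y).
Proof. by case=> m ->; case=> m' ->; exists (m - m'); rewrite map_mxB mulmxBl. Qed.

Lemma cone_unit_sphereP (v : 'rV[R]_d) : cone (@unit_sphere R d) v <-> v != 0.
Proof.
split=> [[r [r_gt0 [w /= w1 ->]]]|v0].
  by rewrite scaler_eq0 negb_or gt_eqF //= -enorm_gt0 w1.
have v_gt0 : 0 < enorm v by rewrite enorm_gt0.
exists (enorm v); split => //; exists ((enorm v)^-1 *: v).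
  by rewrite /unit_sphere /= enormZ ger0_norm ?invr_ge0 ?ltW // mulVf ?gt_eqF.
by rewrite scalerA mulfV ?scale1r ?gt_eqF.
Qed.

Lemma QsetP t x :
  Q t x <-> [/\ lattice M x, - t < ucoord x < 1 - t & rsubmx x != 0].
Proof.
rewrite /Qset /= cone_unit_sphereP.
by split=> [[? [? ?]]|[? ? ?]].
Qed.

Lemma Fval_le t x : Q t x -> F t <= enorm (rsubmx x).
Proof.
move=> Qx; apply: ge_inf; last by exists x.
by exists 0 => _ [y _ <-]; apply: enorm_ge0.
Qed.

Lemma Fval_approx t x eps : Q t x -> 0 < eps ->
  exists2 y, Q t y & enorm (rsubmx y) < F t + eps.
Proof.
move=> Qx eps_gt0.
have has_infQ : has_inf [set enorm (rsubmx y) | y in Q t].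
  by split; [exists (enorm (rsubmx x)), x | exists 0 => _ [y _ <-]; apply: enorm_ge0].
by have [_ [y Qy <-] ?] := inf_adherent eps_gt0 has_infQ; exists y.
Qed.

Definition slab y := [/\ lattice M y, `|ucoord y| < 2^-1 & rsubmx y != 0].

Lemma slab_Qset t y : 0 < t < 1 -> slab y -> Q t y \/ Q t (- y).
Proof.
move=> /andP[t_gt0 t_lt1] [Ly uy vy].
have [ut|] := boolP (- t < ucoord y < 1 - t); first by left; apply/QsetP.
rewrite negb_and -!leNgt => ut; right; apply/QsetP; split.
- exact: latticeN.
- rewrite ucoordN; move: ut uy; case: (lerP 0 (ucoord y)) => [u0|u0].
    by rewrite ger0_norm // => /orP[] ? ?; apply/andP; split; lra.
  by rewrite ltr0_norm // => /orP[] ? ?; apply/andP; split; lra.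
- by rewrite raddfN oppr_eq0.
Qed.

Lemma Fval_le_slab t y : 0 < t < 1 -> slab y -> F t <= enorm (rsubmx y).
Proof.
move=> t01 /(slab_Qset t01) [] /Fval_le //.
by rewrite raddfN enormN.
Qed.

(* The first clause rules out the junk value [F t = inf set0 = 0]. *)
Definition below_slab t := (exists x, Q t x) /\
  exists2 g, F t < g & forall y, slab y -> g <= enorm (rsubmx y).

Lemma not_below_slab_approx t g : ~ below_slab t -> (exists x, Q t x) ->
  F t < g -> exists2 y, slab y & enorm (rsubmx y) < g.
Proof.
move=> not_below Qt Ftg; apply: contrapT => no_y; apply: not_below; split => //.
exists g => // y sy; rewrite leNgt; apply/negP => lt_yg.
by apply: no_y; exists y.
Qed.

Lemma Fval_not_below_empty t : ~ below_slab t -> ~ (exists y, slab y) -> F t = 0.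
Proof.
move=> not_below no_slab.
have Q0 : Q t = set0.
  apply/seteqP; split => x // Qx; apply: not_below; split; first by exists x.
  by exists (F t + 1) => [|y sy]; [lra | case: no_slab; exists y].
by rewrite /Fval Q0 image_set0 inf0.
Qed.

Lemma Fval_not_below_eq t t' : 0 < t < 1 -> 0 < t' < 1 ->
  ~ below_slab t -> ~ below_slab t' -> F t = F t'.
Proof.
move=> t01 t'01 not_below not_below'.
have [[y0 sy0]|no_slab] := pselect (exists y, slab y); last first.
  by rewrite !Fval_not_below_empty.
have Qne s : 0 < s < 1 -> exists x, Q s x.
  by move=> s01; case: (slab_Qset s01 sy0) => Qy; eexists; exact: Qy.
have le_Fval s s' : 0 < s < 1 -> 0 < s' < 1 -> ~ below_slab s -> F s' <= F s.
  move=> s01 s'01 not_below_s; rewrite leNgt; apply/negP => lt_s.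
  have [y sy] := not_below_slab_approx not_below_s (Qne s s01) lt_s.
  by rewrite ltNge Fval_le_slab.
by apply/le_anti; rewrite !le_Fval.
Qed.

Lemma below_slab_witness t eps : 0 < t < 1 -> below_slab t -> 0 < eps ->
  exists z, [/\ lattice M z, 2^-1 <= ucoord z < 1, rsubmx z != 0,
    F t <= enorm (rsubmx z) < F t + eps
  & forall y, slab y -> enorm (rsubmx z) < enorm (rsubmx y)].
Proof.
move=> t01 [[x Qx] [g Fg gS]] eps_gt0.
have [|y Qy yF] := Fval_approx (eps := Order.min eps (g - F t)) Qx.
  by rewrite lt_min eps_gt0 subr_gt0.
have Fy := Fval_le Qy; have /QsetP[Ly uy vy] := Qy.
have y_lt y' : slab y' -> enorm (rsubmx y) < enorm (rsubmx y').
  move=> sy'; apply: lt_le_trans (gS _ sy'); apply: lt_le_trans yF _.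
  by rewrite -lerBrDl ge_min lexx orbT.
have uy_ge : 2^-1 <= `|ucoord y|.
  by rewrite leNgt; apply/negP => uy_lt; have := y_lt y (And3 Ly uy_lt vy); rewrite ltxx.
have [z [Lz uz vz nz]] : exists z, [/\ lattice M z, ucoord z = `|ucoord y|,
    rsubmx z != 0 & enorm (rsubmx z) = enorm (rsubmx y)].
  case: (lerP 0 (ucoord y)) => u0; [exists y | exists (- y)].
    by rewrite ger0_norm.
  by rewrite ucoordN ltr0_norm // raddfN oppr_eq0 enormN; split => //; apply: latticeN.
exists z; rewrite uz nz; split => //.
- by rewrite uy_ge ltr_norml; move: uy => /andP[? ?]; apply/andP; split; lra.
- by rewrite Fy; apply: lt_le_trans yF _; rewrite lerD2l ge_min lexx.
Qed.

Lemma below_slab_kissing n (t : 'I_n -> R) : (forall i, 0 < t i < 1) ->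
  (forall i, below_slab (t i)) -> injective (F \o t) -> kissing_config R d n.
Proof.
move=> t01 below_t Ft_inj.
have [eps eps_gt0 gap] := exists_min_gap (F \o t).
have /choice[z zP] i := below_slab_witness (t01 i) (below_t i) eps_gt0.
exists (fun i => to_sphere2 (rsubmx (z i))); split => [i|i j].
  by have [_ _ vz _ _] := zP i; rewrite enorm_to_sphere2.
wlog Ftij : i j / F (t i) < F (t j).
  move=> wlog_ij ij; have : F (t i) != F (t j) by apply: contra ij => /eqP/Ft_inj ->.
  case: (ltgtP (F (t i)) (F (t j))) => // Fij _; first exact: wlog_ij.
  by rewrite -enormN opprB wlog_ij // eq_sym.
move=> _.
have [Li /andP[ui1 ui2] vi /andP[_ norm_i] slab_i] := zP i.
have [Lj /andP[uj1 uj2] vj /andP[norm_j _] slab_j] := zP j.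
have vij : rsubmx (z i) != rsubmx (z j).
  apply/eqP => vE; have := lt_le_trans norm_i (le_trans (gap _ _ Ftij) norm_j).
  by rewrite vE ltxx.
have sij : slab (z i - z j).
  split; first exact: latticeB.
    by rewrite ucoordB ltr_norml; apply/andP; split; lra.
  by rewrite raddfB subr_eq0.
have := slab_i _ sij; have := slab_j _ sij; rewrite raddfB => ltj lti.
by apply: to_sphere2_sep => //; apply: ltW.
Qed.

End LatticeSlab.

Theorem theorem6p1 (R : realType) (d : nat) (hd : (3 <= d)%N)
    (M : 'M[R]_(1 + d)) (hM : \det M = 1)
    (n : nat) (f : 'I_n -> R) (finj : injective f)
    (fval : forall i, Fvalues (@unit_sphere R d) M (f i)) :
  ((n%:R)%:E <= kissing_number R d + 1%:E)%E.
Proof.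
have /choice[t tP] : forall i, exists t, 0 < t < 1 /\ Fval (@unit_sphere R d) M t = f i.
  by move=> i; case: (fval i) => t ? ?; exists t.
pose G := [set i | `[< below_slab M (t i) >]]%SET.
have kissG : kissing_config R d #|G|.
  apply: (below_slab_kissing (M := M) (t := t \o enum_val)) => [k|k|k k' /=].
  - exact: (tP _).1.
  - by have := enum_valP k; rewrite inE => /asboolP.
  - by rewrite !(tP _).2 => /finj/enum_val_inj.
have notG_le1 : (#|~: G| <= 1)%N.
  apply/card_le1_eqP => i j; rewrite !inE => /asboolPn not_below_i /asboolPn not_below_j.
  apply: finj; rewrite -(tP i).2 -(tP j).2.
  exact: Fval_not_below_eq (tP j).1 (tP i).1 not_below_j not_below_i.
have n_le : (n <= #|G| + 1)%N by rewrite -{1}(card_ord n) -(cardsC G) leq_add2l.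
apply: le_trans (leeD2r _ (ereal_sup_ubound _)); last by exists #|G|.
  by rewrite -EFinD lee_fin natr1 ler_nat -addn1.
Qed.
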